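(* Let $w\in[k]^n$ and let $m$ be a positive integer. If $\mathrm{LT}(w)\geq m$, then $w$ contains monotone twins of length $m$.
   Context: $[k]=\{1,\dots,k\}$; $w[i]$ is the $i$-th letter of $w$. Two subsequences of $w$ are twins if they are equal as words and use disjoint sets of positions of $w$; $\mathrm{LT}(w)$ is the maximum length of twins in $w$. Twins $w_1,w_2$ of length $m$, occupying positions $p_1<\dots<p_m$ and $p_1'<\dots<p_m'$ of $w$ respectively, are monotone if $p_i<p_i'$ for all $i$ (the $i$-th letter of $w_1$ precedes the $i$-th letter of $w_2$ in $w$). *)

From mathcomp Require Import all_boot all_order.
Set Implicit Arguments. Unset Strict Implicit. Unset Printing Implicit Defensive.

(* A word w in [k]^n is a function 'I_n -> 'I_k (positions 0..n-1, letters
   0..k-1).  A subsequence of length m is given by its strictly increasing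
   position map p : 'I_m -> 'I_n. *)

Definition incr_pos (n m : nat) (p : {ffun 'I_m -> 'I_n}) : bool :=
  [forall i : 'I_m, forall j : 'I_m, (i < j)%N ==> (p i < p j)%N].

Definition twins (k n m : nat) (w : 'I_n -> 'I_k)
  (p q : {ffun 'I_m -> 'I_n}) : bool :=
  [&& incr_pos p, incr_pos q,
      [forall i : 'I_m, w (p i) == w (q i)] &
      [forall i : 'I_m, forall j : 'I_m, p i != q j]].

Definition has_twins (k n m : nat) (w : 'I_n -> 'I_k) : bool :=
  [exists p : {ffun 'I_m -> 'I_n}, exists q : {ffun 'I_m -> 'I_n}, twins w p q].

(* LT(w): maximum length of twins in w (twins have length <= n/2 <= n). *)
Definition LT (k n : nat) (w : 'I_n -> 'I_k) : nat :=
  \max_(m < n.+1 | has_twins m w) m.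

Definition monotone_twins (k n m : nat) (w : 'I_n -> 'I_k)
  (p q : {ffun 'I_m -> 'I_n}) : bool :=
  twins w p q && [forall i : 'I_m, (p i < q i)%N].

From mathcomp Require Import all_boot all_order.
From mathcomp Require Import zify.

Set Implicit Arguments.
Unset Strict Implicit.
Unset Printing Implicit Defensive.

(* Take twins of maximal length LT(w) >= m and keep their first m letters.
   Swapping the i-th positions of the two subsequences whenever the second
   comes first replaces them by their pointwise minimum and maximum: both are
   still strictly increasing, they spell the same word, and they use the same
   set of positions, so they are monotone twins. *)

Lemma incr_posP (n m : nat) (p : {ffun 'I_m -> 'I_n}) :
  reflect (forall i j : 'I_m, (i < j)%N -> (p i < p j)%N) (incr_pos p).
Proof.
apply: (iffP forallP) => [incr i j | incr i]; last first.
  by apply/forallP => j; apply/implyP; apply: incr.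
by move/forallP/(_ j)/implyP: (incr i).
Qed.

Lemma incr_pos_inj (n m : nat) (p : {ffun 'I_m -> 'I_n}) :
  incr_pos p -> injective p.
Proof.
move/incr_posP=> incr i j pij.
by case: (ltngtP i j) => [/incr|/incr|/val_inj //]; rewrite pij ltnn.
Qed.

Lemma has_twins0 (k n : nat) (w : 'I_n -> 'I_k) : has_twins 0 w.
Proof.
pose e : {ffun 'I_0 -> 'I_n} := ffun0 (card_ord 0).
by apply/existsP; exists e; apply/existsP; exists e; apply/and4P; split;
  apply/forallP => -[].
Qed.

Lemma has_twins_LT (k n : nat) (w : 'I_n -> 'I_k) : has_twins (LT w) w.
Proof.
rewrite /LT (bigmax_eq_arg (ord0 : 'I_n.+1) (has_twins0 w)).
by case: arg_maxnP => [|M]; [exact: has_twins0 | ].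
Qed.

Section Twins.

Variables (k n M : nat) (w : 'I_n -> 'I_k) (p q : {ffun 'I_M -> 'I_n}).
Hypothesis pq_twins : twins w p q.

Let p_incr : incr_pos p. Proof. by case/and4P: pq_twins. Qed.
Let q_incr : incr_pos q. Proof. by case/and4P: pq_twins. Qed.

Lemma twins_same_letter (i : 'I_M) : w (p i) = w (q i).
Proof. by case/and4P: pq_twins => _ _ /forallP/(_ i)/eqP. Qed.

Lemma twins_disjoint (i j : 'I_M) : p i != q j.
Proof. by case/and4P: pq_twins => _ _ _ /forallP/(_ i)/forallP/(_ j). Qed.

Lemma twins_take (m : nat) (le_mM : (m <= M)%N) :
  twins w [ffun i => p (widen_ord le_mM i)] [ffun i => q (widen_ord le_mM i)].
Proof.
apply/and4P; split.
- by apply/incr_posP => i j ij; rewrite !ffunE; apply: (incr_posP _ p_incr).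
- by apply/incr_posP => i j ij; rewrite !ffunE; apply: (incr_posP _ q_incr).
- by apply/forallP => i; rewrite !ffunE twins_same_letter.
- by apply/forallP => i; apply/forallP => j; rewrite !ffunE twins_disjoint.
Qed.

Definition twins_lo : {ffun 'I_M -> 'I_n} :=
  [ffun i => if (p i < q i)%N then p i else q i].
Definition twins_hi : {ffun 'I_M -> 'I_n} :=
  [ffun i => if (p i < q i)%N then q i else p i].

Lemma twins_loE (i : 'I_M) : twins_lo i = minn (p i) (q i) :> nat.
Proof. by rewrite ffunE /minn; case: ifP. Qed.

Lemma twins_hiE (i : 'I_M) : twins_hi i = maxn (p i) (q i) :> nat.
Proof. by rewrite ffunE /maxn; case: ifP. Qed.

Lemma twins_sort : monotone_twins w twins_lo twins_hi.
Proof.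
have pq_neq (i j : 'I_M) : (p i : nat) <> q j.
  by move=> /val_inj pq; move: (twins_disjoint i j); rewrite pq eqxx.
have lt_p := incr_posP _ p_incr; have lt_q := incr_posP _ q_incr.
apply/andP; split; last first.
  by apply/forallP => i; rewrite twins_loE twins_hiE; have := pq_neq i i; lia.
apply/and4P; split.
- apply/incr_posP => i j ij; rewrite !twins_loE.
  by have := lt_p i j ij; have := lt_q i j ij; lia.
- apply/incr_posP => i j ij; rewrite !twins_hiE.
  by have := lt_p i j ij; have := lt_q i j ij; lia.
- by apply/forallP => i; rewrite !ffunE; case: ifP; rewrite twins_same_letter.
- apply/forallP => i; apply/forallP => j; apply/eqP => /(congr1 (@nat_of_ord n)).
  rewrite twins_loE twins_hiE; have [<-|ij] := eqVneq i j.
    by have := pq_neq i i; lia.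
  have p_ij : (p i : nat) <> p j by move/val_inj/(incr_pos_inj p_incr); apply/eqP.
  have q_ij : (q i : nat) <> q j by move/val_inj/(incr_pos_inj q_incr); apply/eqP.
  by have := pq_neq i j; have := pq_neq j i; lia.
Qed.

End Twins.

Theorem lemma17 (k n m : nat) (w : 'I_n -> 'I_k) :
  (0 < m)%N -> (m <= LT w)%N ->
  exists p q : {ffun 'I_m -> 'I_n}, monotone_twins w p q.
Proof.
move=> _ le_m_LT.
have /existsP[p /existsP[q pq_twins]] := has_twins_LT w.
have mq_twins := twins_take pq_twins le_m_LT.
by eexists; eexists; exact: twins_sort mq_twins.
Qed.
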